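(* Let $s\ge1$ be an integer, let $(G,Z)$ be a monic selfless plantation with thickness $k$, and let $N$ be the set of vertices of $V(G)\setminus Z$ with a neighbour in $Z$. Suppose that every component of $G\setminus Z$ contains at least two vertices of $N$. Then $|N|\le 4(k\phi(s)+1)|Z|$.
   Context: Graphs are finite and simple. Two subgraphs are anticomplete if their vertex sets are disjoint and no edge joins them. $G$ is $s\mathcal{O}$-free if no $s$ cycles of $G$ are pairwise vertex-disjoint and pairwise anticomplete. $Z\subseteq V(G)$ is cycle-hitting if every cycle of $G$ has a vertex in $Z$. A plantation is a pair $(G,Z)$ with $G$ an $s\mathcal{O}$-free graph and $Z$ cycle-hitting. $(G,Z)$ is monic if $Z$ is stable and each vertex of $N$ has exactly one neighbour in $Z$. A transition is a path of $G\setminus Z$ of length at least one with both ends in $N$ and no internal vertex in $N$; a vertex of $Z$ adjacent to an end of a transition $P$ is a foot of $P$. A self-transition is a transition with only one foot; $(G,Z)$ is selfless if there is none. For $z,z'\in Z$, the multiplicity of $(z,z')$ is the number of transitions whose feet are exactly $z,z'$; the thickness is the maximum multiplicity over pairs of elements of $Z$. $\phi(s)\ge0$ denotes a number (which exists by the Erdős–Pósa theorem) such that every multigraph in which no $s$ cycles are pairwise vertex-disjoint has a set of at most $\phi(s)$ vertices meeting every cycle; in multigraphs, loops and pairs of parallel edges count as cycles. *)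

From mathcomp Require Import all_boot.
From mathcomp Require Import boolp.

Set Implicit Arguments.
Unset Strict Implicit.
Unset Printing Implicit Defensive.

(* A finite multigraph: vertex type V, edge type E, each edge with a pair of
   (possibly equal) endpoints.  Loops and parallel edges allowed. *)
Section Multigraph.
Variables (V E : finType) (ends : E -> V * V).

Definition mjoins (f : E) (u v : V) : bool :=
  (ends f == (u, v)) || (ends f == (v, u)).

Definition madj (u v : V) : bool := [exists f, mjoins f u v].

(* A cycle of the multigraph, given by its (distinct) vertex sequence:
   a loop, a pair of parallel edges, or an ordinary cycle of length >= 3. *)
Definition mcycle (c : seq V) : bool :=
  uniq c &&
  match c with
  | [::] => false
  | [:: v] => [exists f, ends f == (v, v)]
  | [:: u; v] => [exists f1, exists f2, (f1 != f2) && mjoins f1 u v && mjoins f2 u v]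
  | _ => cycle madj c
  end.
End Multigraph.

(* phi is an admissible value of the Erdos-Posa function at s: every multigraph
   without s pairwise vertex-disjoint cycles has a set of at most phi vertices
   meeting every cycle. *)
Definition erdos_posa_bound (s phi : nat) : Prop :=
  forall (V E : finType) (ends : E -> V * V),
    ~ (exists cs : 'I_s -> seq V,
          (forall i, mcycle ends (cs i)) /\
          (forall i j, i <> j -> [disjoint cs i & cs j])) ->
    exists X : {set V}, #|X| <= phi /\
      (forall c, mcycle ends c -> exists2 x, x \in X & x \in c).

Section Graph.
Variables (T : finType) (e : rel T).

Definition simple_graph : Prop := symmetric e /\ irreflexive e.

Definition gcycle (c : seq T) : bool := uniq c && (2 < size c) && cycle e c.

Definition anticomplete (c1 c2 : seq T) : Prop :=
  forall x y, x \in c1 -> y \in c2 -> x <> y /\ ~~ e x y.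

Definition sO_free (s : nat) : Prop :=
  ~ (exists cs : 'I_s -> seq T,
        (forall i, gcycle (cs i)) /\
        (forall i j, i <> j -> anticomplete (cs i) (cs j))).

Definition cycle_hitting (Z : {set T}) : Prop :=
  forall c, gcycle c -> exists2 z, z \in Z & z \in c.

Definition plantation (s : nat) (Z : {set T}) : Prop :=
  simple_graph /\ sO_free s /\ cycle_hitting Z.

Variable Z : {set T}.

Definition Nset : {set T} := [set v | (v \notin Z) && [exists z in Z, e v z]].

Definition monic : Prop :=
  (forall z z', z \in Z -> z' \in Z -> ~~ e z z') /\
  (forall v, v \in Nset -> #|[set z in Z | e v z]| = 1).

Definition transition (p : seq T) : bool :=
  match p with
  | [::] => false
  | x :: q =>
      (q != [::]) && path e x q && uniq p && all (fun v => v \notin Z) p &&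
      (x \in Nset) && (last x q \in Nset) &&
      all (fun v => v \notin Nset) (behead (belast x q))
  end.

Definition feet (p : seq T) : {set T} :=
  match p with
  | [::] => set0
  | x :: q => [set z in Z | e z x || e z (last x q)]
  end.

Definition selfless : Prop := forall p, transition p -> #|feet p| != 1.

(* edge set of a path; a transition (as a subgraph) is identified by it *)
Definition path_edges (p : seq T) : {set {set T}} :=
  [set E in [seq [set xy.1; xy.2] | xy <- zip p (behead p)]].

Definition multiplicity (z z' : T) : nat :=
  #|[set S : {set {set T}} |
      `[< exists p, [/\ transition p, path_edges p = S & feet p = [set z; z']] >]]|.

Definition thickness : nat :=
  \max_(zz : T * T | (zz.1 \in Z) && (zz.2 \in Z)) multiplicity zz.1 zz.2.

Definition eminusZ : rel T := [rel x y | e x y && (x \notin Z) && (y \notin Z)].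

Definition component (v : T) : {set T} :=
  [set w | (w \notin Z) && connect eminusZ v w].

End Graph.

From mathcomp Require Import all_boot.
From mathcomp Require Import boolp.
From mathcomp Require Import zify.

Set Implicit Arguments.
Unset Strict Implicit.
Unset Printing Implicit Defensive.

(* Since Z meets every cycle, G \ Z is a forest; root each of its components at
   a vertex of N.  For a non-root b in N, climbing from b towards the root up to
   the next vertex of N (the parent of b) gives a transition, whose two feet
   differ as (G, Z) is selfless.  In each component keep the non-root vertices
   of N whose number of N-ancestors has the most frequent residue mod 3; as a
   component has at least two vertices of N, at least a quarter of N is kept.
   Transitions of kept vertices with disjoint feet are anticomplete, since an
   edge between them would force their N-depths to differ by one or two.  In the
   multigraph H on Z with one edge joining the feet of each kept vertex, every
   cycle lifts to a cycle of G through its vertices and the transitions above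
   it, disjoint cycles lift to anticomplete ones, so H has no s disjoint
   cycles.  A set X of at most phi(s) vertices meeting all cycles of H leaves a
   forest on Z \ X, with at most |Z| edges, while at most k |Z| edges meet each
   vertex of X, as distinct kept vertices give distinct transitions. *)

Lemma path_all_target (T : Type) (r : rel T) (P : pred T) x p :
  (forall u v, r u v -> P v) -> path r x p -> all P p.
Proof.
move=> rP; elim: p x => [|y p IHp] x //= /andP[rxy pp].
by rewrite (rP _ _ rxy) (IHp _ pp).
Qed.

Lemma belast_neq_last (T : eqType) (x y : T) s :
  uniq (x :: s) -> y \in belast x s -> y != last x s.
Proof.
rewrite lastI rcons_uniq => /andP[nl _] yb.
by apply: contraNneq nl => <-.
Qed.

Lemma mem_zip_pair (T : eqType) (s t : seq T) xy :
  xy \in zip s t -> (xy.1 \in s) && (xy.2 \in t).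
Proof.
elim: s t => [|a s IHs] [|b t] //=; rewrite inE => /orP[/eqP->|/IHs/andP[h1 h2]].
  by rewrite !inE !eqxx.
by rewrite !inE h1 h2 !orbT.
Qed.

Lemma cycle_rot_path (T : eqType) (r : rel T) (c : seq T) y :
  uniq c -> cycle r c -> 2 < size c -> y \in c ->
  exists q, [/\ path r (next c y) q, last (next c y) q = prev c y,
    next c y != prev c y & {subset next c y :: q <= [pred w in c | w != y]}].
Proof.
move=> uc cc sc yc; case: (rot_to yc) => i q rot_c.
have uq : uniq (y :: q) by rewrite -rot_c rot_uniq.
have cq : cycle r (y :: q) by rewrite -rot_c rot_cycle.
have sq : 1 < size q by rewrite -(size_rot i) rot_c in sc.
rewrite -(next_rot i uc y) -(prev_rot i uc y) rot_c.
case: q rot_c sq uq cq => [|n1 q'] // rot_c sq uq cq.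
have -> : next (y :: n1 :: q') y = n1 by rewrite next_nth mem_head /= eqxx.
have -> : prev (y :: n1 :: q') y = last n1 q'.
  rewrite prev_nth mem_head; move: uq; rewrite cons_uniq => /andP[yq _].
  by rewrite (memNindex yq) (nth_last y (y :: n1 :: q')).
exists q'; split => //.
- by move: cq; rewrite /cycle /= rcons_path => /and3P[_ -> _].
- move: sq uq; case: q' {rot_c cq} => [|a q'] //= _ /andP[_ /andP[nq _]].
  by apply: contraNneq nq => ->; rewrite mem_last.
- move=> w wq; rewrite inE /= -(mem_rot i) rot_c inE wq orbT /=.
  by apply: contraTneq uq => <-; rewrite cons_uniq wq.
Qed.

Lemma modn3_addl_neq d m : 0 < d < 3 -> (d + m) %% 3 != m %% 3.
Proof. by rewrite -{2}(add0n m) eqn_modDr; case: d => [|[|[|]]]. Qed.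

Lemma card_fibers (I J : finType) (f : I -> J) (A : {set I}) (B : {set J}) :
  {in A, forall i, f i \in B} -> #|A| = \sum_(j in B) #|[set i in A | f i == j]|.
Proof.
move=> fAB; rewrite -sum1_card (partition_big f (mem B)) //=.
by apply: eq_bigr => j _; rewrite sum1dep_card.
Qed.

Section SimpleGraph.
Variables (T : finType) (e : rel T).
Hypothesis e_sym : symmetric e.

Lemma path_edge_gcycle (r : rel T) x y p :
  subrel r e -> x != y -> e x y -> ~~ r x y ->
  path r x p -> last x p = y ->
  exists2 c, gcycle e c & {subset c <= x :: p}.
Proof.
move=> sub_re neq_xy exy nrxy rp.
case: (shortenP rp) => p' rp' up' sub_p' lp'.
exists (x :: p'); last first.
  by move=> u; rewrite !inE => /orP[->//|/sub_p' ->]; rewrite orbT.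
rewrite /gcycle up' /=.
case: p' rp' {up' sub_p'} lp' => [|y1 [|y2 q]].
- by move=> _ /= xy; rewrite xy eqxx in neq_xy.
- by move=> /= /andP[r1 _] y1y; rewrite -y1y r1 in nrxy.
move=> rp' lp'.
by rewrite rcons_path (sub_path sub_re rp') lp' e_sym exy.
Qed.

End SimpleGraph.

Section MultigraphForest.
Variables (V E : finType) (ends : E -> V * V).

Definition madj_in (A : {set E}) : rel V :=
  fun u v => [exists a in A, mjoins ends a u v].

Definition mcomponent (A : {set E}) (Vs : {set V}) x :=
  [set y in Vs | connect (madj_in A) x y].

Definition mcomponents (A : {set E}) (Vs : {set V}) :=
  [set mcomponent A Vs x | x in Vs].

Lemma mjoinsC a u v : mjoins ends a u v = mjoins ends a v u.
Proof. by rewrite /mjoins orbC. Qed.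

Lemma madj_in_sym A : symmetric (madj_in A).
Proof.
by move=> u v; apply/existsP/existsP => -[a /andP[aA j]];
  exists a; rewrite aA mjoinsC.
Qed.

Lemma madj_inS (A B : {set E}) : A \subset B -> subrel (madj_in A) (madj_in B).
Proof.
move=> /subsetP sAB u v /existsP[a /andP[aA j]].
by apply/existsP; exists a; rewrite sAB.
Qed.

Lemma madj_in_madj A : subrel (madj_in A) (madj ends).
Proof. by move=> u v /existsP[a /andP[_ j]]; apply/existsP; exists a. Qed.

Lemma card_mcomponents0 Vs : #|mcomponents set0 Vs| = #|Vs|.
Proof.
rewrite card_in_imset // => x y _ yVs /setP /(_ y).
rewrite !inE yVs connect0 => /connectP[[|w p] //= /andP[/existsP[a]]].
by rewrite inE.
Qed.

Section EdgesInside.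
Variables (Vs : {set V}) (B : {set E}).
Hypothesis endsB : forall a, a \in B -> ((ends a).1 \in Vs) && ((ends a).2 \in Vs).

Lemma madj_in_target u v : madj_in B u v -> v \in Vs.
Proof.
move=> /existsP[a /andP[/endsB/andP[e1 e2]]].
by rewrite /mjoins => /orP[]/eqP aE; rewrite aE in e1 e2.
Qed.

Lemma connect_mcycle a u v :
  a \notin B -> mjoins ends a u v -> u \in Vs -> connect (madj_in B) u v ->
  exists2 c, mcycle ends c & {subset c <= Vs}.
Proof.
move=> aB jauv uVs /connectP[p pB lp].
have [uv|neq_uv] := eqVneq u v.
  exists [:: u]; last by move=> x; rewrite inE => /eqP ->.
  by apply/existsP; exists a; move: jauv; rewrite /mjoins -uv orbb.
case: (shortenP pB) lp => p' pB' up' _ lp'.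
have p'Vs : {subset p' <= Vs} by apply/allP/(path_all_target madj_in_target pB').
case: p' pB' up' lp' p'Vs => [|w1 [|w2 q]].
- by move=> _ _ /= vu; rewrite vu eqxx in neq_uv.
- move=> /= /andP[/existsP[a' /andP[a'B j']] _] _ vw1 w1Vs; subst v.
  exists [:: u; w1]; last by move=> x; rewrite !inE => /orP[]/eqP-> //; rewrite w1Vs ?mem_head.
  rewrite /mcycle /= inE neq_uv /=; apply/existsP; exists a; apply/existsP; exists a'.
  by rewrite jauv j' !andbT; apply: contraNneq _ aB => ->.
move=> pB' up' lp' p'Vs; exists [:: u, w1, w2 & q]; last first.
  by move=> x; rewrite inE => /orP[/eqP->//|/p'Vs].
apply/andP; split; first exact: up'.
rewrite /cycle rcons_path (sub_path (@madj_in_madj B) pB') /=.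
by move: lp' => /= <-; apply/existsP; exists a; rewrite mjoinsC.
Qed.

End EdgesInside.

Lemma card_mcomponents_bridge (Vs : {set V}) (B : {set E}) a u v :
  a \in B -> mjoins ends a u v -> u \in Vs -> v \in Vs ->
  ~~ connect (madj_in (B :\ a)) u v ->
  #|mcomponents B Vs| < #|mcomponents (B :\ a) Vs|.
Proof.
move=> aB jauv uVs vVs nc.
have Buv : madj_in B u v by apply/existsP; exists a; rewrite aB.
have symB : connect_sym (madj_in B) := sym_connect_sym (madj_in_sym B).
have subB : subrel (connect (madj_in (B :\ a))) (connect (madj_in B)).
  by apply: connect_sub => x y /(madj_inS (subsetDl B [set a])) /connect1.
pose h (C : {set V}) := [set y in Vs | [exists x in C, connect (madj_in B) x y]].
have hC x : x \in Vs -> h (mcomponent (B :\ a) Vs x) = mcomponent B Vs x.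
  move=> xVs; apply/setP => y; rewrite !inE; case: (y \in Vs) => //=.
  apply/existsP/idP => [[x' /andP[]]|cxy]; last by exists x; rewrite inE xVs connect0.
  by rewrite inE => /andP[_ /subB] /connect_trans; apply.
have -> : mcomponents B Vs = h @: mcomponents (B :\ a) Vs.
  by rewrite -imset_comp; apply: eq_in_imset => x /hC.
rewrite ltn_neqAle leq_imset_card andbT; apply/imset_injP => h_inj.
suff /setP /(_ v) : mcomponent (B :\ a) Vs u = mcomponent (B :\ a) Vs v.
  by rewrite !inE vVs connect0 (negbTE nc).
apply: h_inj; try by apply: imset_f.
rewrite !hC //; apply/setP => y; rewrite !inE; case: (y \in Vs) => //=.
have cvu : connect (madj_in B) v u by rewrite symB connect1.
by apply/idP/idP => [/(connect_trans cvu)|/(connect_trans (connect1 Buv))].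
Qed.

Lemma acyclic_card_edges (Vs : {set V}) (A : {set E}) :
  (forall a, a \in A -> ((ends a).1 \in Vs) && ((ends a).2 \in Vs)) ->
  (forall c, mcycle ends c -> ~ {subset c <= Vs}) ->
  #|A| <= #|Vs|.
Proof.
move=> endsA acyc.
suff count n (B : {set E}) : #|B| = n -> B \subset A -> #|B| + #|mcomponents B Vs| <= #|Vs|.
  by have := count _ A erefl (subxx A); lia.
elim: n B => [|n IHn] B cardB sBA.
  by move: cardB => /eqP; rewrite cards_eq0 => /eqP ->; rewrite cards0 card_mcomponents0.
have [a aB] : exists a, a \in B by apply/card_gt0P; rewrite cardB.
have endsB b : b \in B -> ((ends b).1 \in Vs) && ((ends b).2 \in Vs).
  by move=> /(subsetP sBA); apply: endsA.
have cardBa : #|B :\ a| = n by move: cardB; rewrite (cardsD1 a) aB => -[].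
have := IHn _ cardBa (subset_trans (subsetDl B _) sBA).
case/andP: (endsB _ aB); case aE : (ends a) => [u v] /= uVs vVs.
have jauv : mjoins ends a u v by rewrite /mjoins aE eqxx.
suff lt_comp : #|mcomponents B Vs| < #|mcomponents (B :\ a) Vs|.
  by move=> IH; apply: leq_trans IH; rewrite cardB cardBa addSnnS leq_add2l.
apply: (card_mcomponents_bridge aB jauv uVs vVs).
have endsBa b : b \in B :\ a -> ((ends b).1 \in Vs) && ((ends b).2 \in Vs).
  by move=> /setD1P[_ /endsB].
apply/negP => /(connect_mcycle endsBa _ jauv uVs) [|c cyc cVs].
- by rewrite !inE eqxx.
- exact: acyc cyc cVs.
Qed.

End MultigraphForest.

Section Plantation.
Variables (T : finType) (e : rel T) (Z : {set T}).
Hypotheses (e_sym : symmetric e) (e_irr : irreflexive e) (Zhit : cycle_hitting e Z)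
  (Zstable : forall z z', z \in Z -> z' \in Z -> ~~ e z z')
  (Nmonic : forall v, v \in Nset e Z -> #|[set z in Z | e v z]| = 1)
  (Zselfless : selfless e Z)
  (componentN : forall v, v \notin Z -> 2 <= #|component e Z v :&: Nset e Z|).

Local Notation N := (Nset e Z).
Local Notation R := (eminusZ e Z).

Definition foot v := odflt v [pick z in Z | e v z].

Lemma Nset_notZ v : v \in N -> v \notin Z.
Proof. by rewrite inE => /andP[]. Qed.

Lemma Nset_adj v z : v \notin Z -> z \in Z -> e v z -> v \in N.
Proof. by move=> vZ zZ evz; rewrite inE vZ; apply/existsP; exists z; rewrite zZ. Qed.

Lemma footP v : v \in N -> foot v \in Z /\ e v (foot v).
Proof.
rewrite inE => /andP[_ /existsP[z /andP[zZ evz]]].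
rewrite /foot; case: pickP => [z' /andP[-> ->] //|/(_ z)].
by rewrite zZ evz.
Qed.

Lemma footZ v : v \in N -> foot v \in Z. Proof. by case/footP. Qed.
Lemma foot_adj v : v \in N -> e v (foot v). Proof. by case/footP. Qed.

Lemma foot_uniq v z : v \in N -> z \in Z -> e v z -> z = foot v.
Proof.
move=> vN zZ evz; have /eqP/cards1P[z0 Nv] := Nmonic vN.
have : z \in [set z in Z | e v z] by rewrite inE zZ evz.
have : foot v \in [set z in Z | e v z] by rewrite inE footZ // foot_adj.
by rewrite Nv !inE => /eqP -> /eqP ->.
Qed.

Lemma eminusZ_sym : symmetric R.
Proof. by move=> u v; rewrite /eminusZ /= e_sym andbAC. Qed.

Lemma eminusZ_sub : subrel R e.
Proof. by move=> u v /andP[/andP[]]. Qed.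

Lemma eminusZ_notZ u v : R u v -> (u \notin Z) && (v \notin Z).
Proof. by move=> /andP[/andP[_ ->] ->]. Qed.

Lemma connect_eminusZ_sym : connect_sym R.
Proof. exact: sym_connect_sym eminusZ_sym. Qed.

Lemma component_connect x y :
  connect R x y -> component e Z x = component e Z y.
Proof.
move=> cxy; apply/setP => w; rewrite !inE; case: (w \in Z) => //=.
apply/idP/idP; last exact: connect_trans.
by apply: connect_trans; rewrite connect_eminusZ_sym.
Qed.

Definition troot x := odflt x [pick r in component e Z x :&: N].

Lemma trootP x : x \notin Z ->
  [/\ troot x \in N, troot x \notin Z & connect R x (troot x)].
Proof.
move=> xZ; have := componentN xZ; rewrite /troot; case: pickP => [r|none].
  by rewrite !inE => /andP[/andP[-> ->] ->].
by rewrite (eq_card0 none).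
Qed.

Lemma troot_N x : x \notin Z -> troot x \in N. Proof. by case/trootP. Qed.
Lemma troot_notZ x : x \notin Z -> troot x \notin Z. Proof. by case/trootP. Qed.
Lemma connect_troot x : x \notin Z -> connect R x (troot x). Proof. by case/trootP. Qed.

Lemma troot_connect x y : x \notin Z -> connect R x y -> troot y = troot x.
Proof.
move=> xZ cxy; rewrite /troot -(component_connect cxy); case: pickP => // none.
by have := componentN xZ; rewrite (eq_card0 none).
Qed.

Lemma troot_idem x : x \notin Z -> troot (troot x) = troot x.
Proof. by move=> xZ; apply: troot_connect xZ (connect_troot xZ). Qed.

(* The first disjunct only makes [depth] total: it fails whenever [x \notin Z]. *)
Definition depth_within x n := ~~ connect R (troot x) x ||
  [exists t : n.-tuple T, path R (troot x) t && (last (troot x) t == x)].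

Lemma depth_exists x : exists n, depth_within x n.
Proof.
rewrite /depth_within; case: (boolP (connect R _ x)) => [/connectP[p pp lp]|]; last by exists 0.
by exists (size p); apply/existsP; exists (in_tuple p); rewrite /= pp -lp eqxx.
Qed.

Definition depth x := ex_minn (depth_exists x).

Lemma depth_min x p :
  path R (troot x) p -> last (troot x) p = x -> depth x <= size p.
Proof.
move=> pp lp; rewrite /depth; case: ex_minnP => n _; apply.
rewrite /depth_within; apply/orP; right; apply/existsP.
by exists (in_tuple p); rewrite /= pp lp eqxx.
Qed.

Lemma depth_path x : x \notin Z ->
  exists2 p, path R (troot x) p & last (troot x) p = x /\ size p = depth x.
Proof.
move=> xZ; rewrite /depth; case: ex_minnP => n; rewrite /depth_within.
rewrite connect_eminusZ_sym connect_troot //= => /existsP[t /andP[pt /eqP lt]] _.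
by exists t => //; rewrite size_tuple.
Qed.

Definition up x := odflt x [pick w | R x w && ((depth w).+1 == depth x)].

Lemma upP x : x \notin Z -> x != troot x ->
  [/\ R x (up x), (depth (up x)).+1 = depth x, up x \notin Z & troot (up x) = troot x].
Proof.
move=> xZ xr.
have [w Rxw dw] : exists2 w, R x w & (depth w).+1 = depth x.
  case: (depth_path xZ) => p pp [lp sp].
  case/lastP: p pp lp sp => [|p0 w]; first by move=> _ /= lp; rewrite lp eqxx in xr.
  rewrite rcons_path last_rcons size_rcons => /andP[pp0 Rw] wx sp; subst w.
  set w := last (troot x) p0 in Rw.
  have rw : troot w = troot x by apply: troot_connect xZ _; rewrite connect1 // eminusZ_sym.
  exists w; first by rewrite eminusZ_sym.
  have dw : depth w <= size p0 by apply: depth_min; rewrite rw.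
  apply/eqP; rewrite eqn_leq -sp ltnS dw /=.
  have wZ : w \notin Z by case/andP: (eminusZ_notZ Rw).
  case: (depth_path wZ) => q; rewrite rw => pq [lq <-].
  by rewrite -(size_rcons q x) sp depth_min ?last_rcons // rcons_path pq lq.
have [Rxu du] : R x (up x) /\ (depth (up x)).+1 = depth x.
  by rewrite /up; case: pickP => [w' /andP[? /eqP]|/(_ w)] //; rewrite Rxw dw eqxx.
split => //; first by case/andP: (eminusZ_notZ Rxu).
by apply: troot_connect xZ _; apply: connect1.
Qed.

Lemma depth_ind (P : T -> Prop) :
  (forall x, x \notin Z -> (forall y, y \notin Z -> depth y < depth x -> P y) -> P x) ->
  forall x, x \notin Z -> P x.
Proof.
move=> IH x; have [n] := ubnP (depth x); elim: n x => // n IHn x dx xZ.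
by apply: IH => // y yZ dy; apply: IHn yZ; apply: leq_trans dy _.
Qed.

Lemma connect_up_troot (r : rel T) :
  (forall w, w \notin Z -> w != troot w -> r w (up w)) ->
  forall u, u \notin Z -> connect r u (troot u).
Proof.
move=> r_up; apply: depth_ind => u uZ IH.
have [ur|ur] := eqVneq u (troot u); first by rewrite -ur connect0.
have [_ du upZ rup] := upP uZ ur.
by rewrite -rup; apply: connect_trans (connect1 (r_up _ uZ ur)) (IH _ upZ _); rewrite -du.
Qed.

(* [G \ Z] is a forest because [Z] meets every cycle. *)
Lemma eminusZ_up x y : R x y ->
  ((x != troot x) && (y == up x)) || ((y != troot y) && (x == up y)).
Proof.
move=> Rxy; apply/negPn/negP => not_up.
case/andP: (eminusZ_notZ Rxy) => xZ yZ.
pose R' := [rel u v | R u v && ~~ (((u == x) && (v == y)) || ((u == y) && (v == x)))].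
have R'sym : symmetric R'.
  move=> u v; rewrite /R' /= eminusZ_sym.
  by case: (u == x); case: (v == y); case: (u == y); case: (v == x); rewrite ?andbF.
have R'_up w : w \notin Z -> w != troot w -> R' w (up w).
  move=> wZ wr; have [Rw _ _ _] := upP wZ wr; rewrite /R' /= Rw /=; apply: contra not_up.
  by case/orP=> /andP[/eqP wx /eqP wy]; subst w; rewrite wr -wy eqxx ?orbT.
have ry : troot y = troot x by apply: troot_connect xZ _; apply: connect1.
have /connectP[p pp lp] : connect R' x y.
  apply: connect_trans (connect_up_troot R'_up xZ) _.
  by rewrite (sym_connect_sym R'sym) -ry connect_up_troot.
have neq_xy : x != y by apply: contraTneq Rxy => <-; rewrite /eminusZ /= e_irr.
have [||c cyc sub_c] := path_edge_gcycle e_sym _ neq_xy (eminusZ_sub Rxy) _ pp (esym lp).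
- by move=> u v /andP[/eminusZ_sub].
- by rewrite /R' /= !eqxx andbF.
case: (Zhit cyc) => z zZ /sub_c; rewrite inE => /orP[/eqP zx|zp].
  by rewrite -zx zZ in xZ.
have R'_notZ u v : R' u v -> v \notin Z by case/andP=> /eminusZ_notZ/andP[].
by have /allP/(_ _ zp) := path_all_target R'_notZ pp; rewrite zZ.
Qed.

Fixpoint climb_from n x :=
  if x \in N then [:: x] else if n is n'.+1 then x :: climb_from n' (up x) else [:: x].
Definition climb x := climb_from (depth x) x.
Definition upN x := last x (climb x).

Fixpoint ndepth_from n x :=
  (x \in N) + (if n is n'.+1 then ndepth_from n' (up x) else 0).
Definition ndepth x := ndepth_from (depth x) x.

Lemma notN_neq_troot x : x \notin Z -> x \notin N -> x != troot x.
Proof. by move=> xZ; apply: contraNneq => ->; rewrite troot_N. Qed.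

Lemma climb_N x : x \in N -> climb x = [:: x].
Proof. by rewrite /climb; case: (depth x) => [|n] /= ->. Qed.

Lemma climb_notN x : x \notin Z -> x \notin N -> climb x = x :: climb (up x).
Proof.
move=> xZ xN; have [_ d _ _] := upP xZ (notN_neq_troot xZ xN).
by rewrite /climb -d /= (negbTE xN).
Qed.

Lemma climb_head x : exists q, climb x = x :: q.
Proof. by rewrite /climb; case: (depth x) => [|n] /=; case: (x \in N); eexists. Qed.

Lemma ndepth_up x : x \notin Z -> x != troot x -> ndepth x = (x \in N) + ndepth (up x).
Proof. by move=> xZ xr; have [_ d _ _] := upP xZ xr; rewrite /ndepth -d. Qed.

Lemma climb_ind (P : T -> Prop) :
  (forall x, x \in N -> P x) ->
  (forall x, x \notin Z -> x \notin N -> P (up x) -> P x) ->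
  forall x, x \notin Z -> P x.
Proof.
move=> PN Pup; apply: depth_ind => x xZ IH.
have [xN|xN] := boolP (x \in N); first exact: PN.
have [_ d upZ _] := upP xZ (notN_neq_troot xZ xN).
by apply: Pup => //; apply: IH upZ _; rewrite -d.
Qed.

Lemma upN_N x : x \in N -> upN x = x.
Proof. by move=> xN; rewrite /upN climb_N. Qed.

Lemma upN_up x : x \notin Z -> x \notin N -> upN x = upN (up x).
Proof. by move=> xZ xN; rewrite /upN (climb_notN xZ xN); case: (climb_head (up x)) => q ->. Qed.

Lemma upN_Nset x : x \notin Z -> upN x \in N.
Proof.
move: x; apply: climb_ind => [x xN|x xZ xN]; first by rewrite upN_N.
by rewrite (upN_up xZ xN).
Qed.

Lemma ndepth_upN x : x \notin Z -> ndepth (upN x) = ndepth x.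
Proof.
move: x; apply: climb_ind => [x xN|x xZ xN IH]; first by rewrite upN_N.
by rewrite (upN_up xZ xN) IH (ndepth_up xZ) ?notN_neq_troot // (negbTE xN).
Qed.

Lemma climb_path x : x \notin Z -> path R x (behead (climb x)).
Proof.
move: x; apply: climb_ind => [x xN|x xZ xN]; first by rewrite climb_N.
have [Rxu _ _ _] := upP xZ (notN_neq_troot xZ xN).
by rewrite (climb_notN xZ xN); case: (climb_head (up x)) => q -> /= ->; rewrite Rxu.
Qed.

Lemma mem_climb x y : x \notin Z -> y \in climb x ->
  [/\ y \notin Z, troot y = troot x & depth y <= depth x].
Proof.
move: x; apply: climb_ind => [x xN|x xZ xN IH].
  by rewrite (climb_N xN) inE => /eqP ->; rewrite Nset_notZ.
have [_ d upZ rup] := upP xZ (notN_neq_troot xZ xN).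
rewrite (climb_notN xZ xN) inE => /orP[/eqP -> //|/IH[yZ ry dy]].
by rewrite ry rup -d (leq_trans dy).
Qed.

Lemma climb_uniq x : x \notin Z -> uniq (climb x).
Proof.
move: x; apply: climb_ind => [x xN|x xZ xN IH]; first by rewrite climb_N.
have [_ d upZ _] := upP xZ (notN_neq_troot xZ xN).
rewrite (climb_notN xZ xN) /= IH andbT; apply/negP => /(mem_climb upZ)[_ _].
by rewrite -d ltnn.
Qed.

Lemma climb_Nset x y : x \notin Z -> y \in climb x -> y \in N -> y = upN x.
Proof.
move: x; apply: climb_ind => [x xN|x xZ xN IH].
  by rewrite (climb_N xN) inE => /eqP ->; rewrite upN_N.
rewrite (climb_notN xZ xN) (upN_up xZ xN) inE => /orP[/eqP ->|/IH //].
by rewrite (negbTE xN).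
Qed.

Lemma climb_up x y : x \notin Z -> y \in climb x -> y \notin N -> up y \in climb x.
Proof.
move: x; apply: climb_ind => [x xN|x xZ xN IH].
  by rewrite (climb_N xN) inE => /eqP ->; rewrite xN.
rewrite (climb_notN xZ xN) inE => /orP[/eqP -> _|/IH yN /yN]; last by rewrite inE orbC => ->.
by case: (climb_head (up x)) => q ->; rewrite !inE eqxx orbT.
Qed.

Lemma upN_climb x y : x \notin Z -> y \in climb x -> upN y = upN x.
Proof.
move: x; apply: climb_ind => [x xN|x xZ xN IH].
  by rewrite (climb_N xN) inE => /eqP ->.
rewrite (climb_notN xZ xN) (upN_up xZ xN) inE => /orP[/eqP ->|/IH //].
exact: upN_up.
Qed.

Definition parent b := upN (up b).
Definition transit b := b :: climb (up b).
Definition nonroot b := (b \in N) && (b != troot b).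

Section Transit.
Variable b : T.
Hypothesis b_nonroot : nonroot b.

Let bN : b \in N. Proof. by case/andP: b_nonroot. Qed.
Let bZ : b \notin Z. Proof. exact: Nset_notZ bN. Qed.
Let br : b != troot b. Proof. by case/andP: b_nonroot. Qed.
Let upZ : up b \notin Z. Proof. by case: (upP bZ br). Qed.

Lemma parent_N : parent b \in N.
Proof. exact: upN_Nset upZ. Qed.

Lemma ndepth_parent : ndepth b = (ndepth (parent b)).+1.
Proof. by rewrite (ndepth_up bZ br) bN /parent ndepth_upN. Qed.

Lemma transit_notZ u : u \in transit b -> u \notin Z.
Proof. by rewrite inE => /orP[/eqP -> //|/(mem_climb upZ)[]]. Qed.

Lemma troot_transit u : u \in transit b -> troot u = troot b.
Proof.
have [_ _ _ rup] := upP bZ br.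
by rewrite inE => /orP[/eqP -> //|/(mem_climb upZ)[_ -> _]].
Qed.

Lemma transit_Nset u : u \in transit b -> u \in N -> u = b \/ u = parent b.
Proof.
rewrite inE => /orP[/eqP -> _|uc uN]; first by left.
by right; apply: climb_Nset upZ uc uN.
Qed.

Lemma upN_transit u : u \in transit b -> u \notin N -> upN u = parent b.
Proof. by rewrite inE => /orP[/eqP ->|/(upN_climb upZ) //]; rewrite bN. Qed.

Lemma up_transit u : u \in transit b -> u != parent b ->
  u != troot u /\ up u \in transit b.
Proof.
rewrite inE => /orP[/eqP -> _|uc up_neq].
  by split=> //; rewrite !inE; case: (climb_head (up b)) => q ->; rewrite mem_head orbT.
have uN : u \notin N by apply: contra up_neq => /(climb_Nset upZ uc) ->.
have [uZ _ _] := mem_climb upZ uc.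
by split; [exact: notN_neq_troot | rewrite inE (climb_up upZ uc uN) orbT].
Qed.

Lemma last_climb_up : last b (climb (up b)) = parent b.
Proof. by rewrite /parent /upN; case: (climb_head (up b)) => q ->. Qed.

Lemma parent_transit : parent b \in transit b.
Proof. by rewrite -last_climb_up mem_last. Qed.

Lemma path_transit : path R b (climb (up b)).
Proof.
have [Rbu _ _ _] := upP bZ br.
by have := climb_path upZ; case: (climb_head (up b)) => q -> /= ->; rewrite Rbu.
Qed.

Lemma transit_uniq : uniq (transit b).
Proof.
have [_ d _ _] := upP bZ br.
rewrite /transit /= climb_uniq // andbT; apply/negP => /(mem_climb upZ)[_ _].
by rewrite -d ltnn.
Qed.

Lemma transit_transition : transition e Z (transit b).
Proof.
have inner_notN : all [pred v | v \notin N] (behead (belast b (climb (up b)))).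
  apply/allP => y yb; apply/negP => yN.
  have := belast_neq_last transit_uniq (mem_behead yb); rewrite last_climb_up /parent.
  case: (climb_head (up b)) yb => q cq; rewrite cq /= => /mem_belast yc.
  by rewrite -(climb_Nset upZ _ yN) ?eqxx // cq.
have all_notZ : all [pred v | v \notin Z] (transit b) by apply/allP => v /transit_notZ.
have := transit_uniq; rewrite /transition /transit => ->.
rewrite last_climb_up parent_N bN inner_notN (sub_path eminusZ_sub path_transit) all_notZ.
by case: (climb_head (up b)) => q ->.
Qed.

Lemma feet_transit : feet e Z (transit b) = [set foot b; foot (parent b)].
Proof.
have pN := parent_N.
rewrite /feet /transit last_climb_up; apply/setP => z; rewrite !inE.
apply/idP/idP => [/andP[zZ /orP[]] ez|/orP[]/eqP->].
- by apply/orP; left; apply/eqP; apply: foot_uniq; rewrite // e_sym.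
- by apply/orP; right; apply/eqP; apply: foot_uniq; rewrite // e_sym.
- by rewrite footZ // e_sym foot_adj.
- by rewrite footZ // [e _ (parent b)]e_sym foot_adj ?orbT.
Qed.

Lemma foot_parent_neq : foot b != foot (parent b).
Proof.
have := Zselfless transit_transition; rewrite feet_transit.
by apply: contra => /eqP ->; rewrite setUid cards1.
Qed.

End Transit.

Lemma nonroot_parent b : nonroot b -> parent b != troot (parent b) -> nonroot (parent b).
Proof. by move=> b_nonroot pr; rewrite /nonroot parent_N. Qed.

Section Anticomplete.
Variables b c : T.
Hypotheses (b_nonroot : nonroot b) (c_nonroot : nonroot c).
Hypothesis feet_neq : forall u v,
  u \in [:: b; parent b] -> v \in [:: c; parent c] -> foot u != foot v.
Hypothesis same_residue : troot b = troot c -> ndepth b %% 3 = ndepth c %% 3.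

Lemma transit_disjoint x : x \in transit b -> x \in transit c -> False.
Proof.
move=> xb xc; have [xN|xN] := boolP (x \in N).
  have xb' : x \in [:: b; parent b].
    by case: (transit_Nset b_nonroot xb xN) => ->; rewrite !inE eqxx ?orbT.
  have xc' : x \in [:: c; parent c].
    by case: (transit_Nset c_nonroot xc xN) => ->; rewrite !inE eqxx ?orbT.
  by have := feet_neq xb' xc'; rewrite eqxx.
have := @feet_neq (parent b) (parent c); rewrite !inE !eqxx !orbT => /(_ erefl erefl).
by rewrite -(upN_transit b_nonroot xb xN) -(upN_transit c_nonroot xc xN) eqxx.
Qed.

(* Such an edge must leave [parent b]; then [ndepth b] exceeds [ndepth c] by
   one or two, which [same_residue] forbids. *)
Lemma transit_up_edge x y :
  x \in transit b -> y \in transit c -> x != troot x -> y = up x -> False.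
Proof.
move=> xb yc xr yx.
have [xp|xp] := eqVneq x (parent b); last first.
  by case: (up_transit b_nonroot xb xp) => _; rewrite -yx => /transit_disjoint; apply.
have p_nonroot : nonroot (parent b) by apply: nonroot_parent => //; rewrite -xp.
have [Rxy _ _ ryx] := upP (transit_notZ b_nonroot xb) xr; rewrite -yx in Rxy ryx.
have ppb : parent (parent b) = upN y by rewrite -xp /parent -yx.
have rbc : troot b = troot c.
  by rewrite -(troot_transit b_nonroot xb) -ryx (troot_transit c_nonroot yc).
have := same_residue rbc; apply/eqP.
rewrite (ndepth_parent b_nonroot) (ndepth_parent p_nonroot) ppb -addn2.
have [yN|yN] := boolP (y \in N).
  rewrite upN_N // addnC.
  case: (transit_Nset c_nonroot yc yN) => ->; first exact: modn3_addl_neq.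
  by rewrite (ndepth_parent c_nonroot) -addn1 -addnA modn3_addl_neq.
rewrite (upN_transit c_nonroot yc yN) (ndepth_parent c_nonroot).
by rewrite addn2 -add1n modn3_addl_neq.
Qed.

End Anticomplete.

Lemma transit_anticomplete b c x y : nonroot b -> nonroot c ->
  (forall u v, u \in [:: b; parent b] -> v \in [:: c; parent c] -> foot u != foot v) ->
  (troot b = troot c -> ndepth b %% 3 = ndepth c %% 3) ->
  x \in transit b -> y \in transit c -> (x != y) && ~~ e x y.
Proof.
move=> b_nonroot c_nonroot feet_neq same_residue xb yc.
have feet_neq' u v : u \in [:: c; parent c] -> v \in [:: b; parent b] -> foot u != foot v.
  by move=> uc vb; rewrite eq_sym feet_neq.
have same_residue' : troot c = troot b -> ndepth c %% 3 = ndepth b %% 3.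
  by move=> rcb; rewrite same_residue.
apply/andP; split.
  by apply: contraTneq yc => <-; apply/negP/(transit_disjoint b_nonroot c_nonroot feet_neq xb).
apply/negP => exy.
have Rxy : R x y by rewrite /eminusZ /= exy (transit_notZ b_nonroot xb) (transit_notZ c_nonroot yc).
case/orP: (eminusZ_up Rxy) => /andP[r /eqP up_eq].
  exact: (transit_up_edge b_nonroot c_nonroot feet_neq same_residue xb yc r up_eq).
exact: (transit_up_edge c_nonroot b_nonroot feet_neq' same_residue' yc xb r up_eq).
Qed.

Definition residue b : 'I_3 := Ordinal (ltn_pmod (ndepth b) (isT : 0 < 3)).

Definition troot_class r := [set b in N | troot b == r].
Definition residue_class r j := [set b in troot_class r :\ r | residue b == j].

Definition best_residue r : 'I_3 := [arg max_(j > ord0) #|residue_class r j|].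

Definition selected :=
  [set b in N | (b != troot b) && (residue b == best_residue (troot b))].

Lemma selected_nonroot b : b \in selected -> nonroot b.
Proof. by rewrite inE => /and3P[bN br _]; rewrite /nonroot bN br. Qed.

Lemma selected_residue b c : b \in selected -> c \in selected ->
  troot b = troot c -> ndepth b %% 3 = ndepth c %% 3.
Proof.
rewrite !inE => /and3P[_ _ /eqP rb] /and3P[_ _ /eqP rc] r_eq.
by have := congr1 val rb; rewrite r_eq -rc /=.
Qed.

Lemma card_troot_selected r : r \in [set troot b | b in N] ->
  #|troot_class r| <= 4 * #|[set b in selected | troot b == r]|.
Proof.
case/imsetP => b0 b0N r_b0.
have b0Z := Nset_notZ b0N.
have rZ : r \notin Z by rewrite r_b0 troot_notZ.
have rr : troot r = r by rewrite r_b0 troot_idem.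
set A := troot_class r.
have rA : r \in A by rewrite inE rr eqxx andbT r_b0 troot_N.
have A2 : 2 <= #|A|.
  apply: leq_trans (componentN rZ) _; apply/subset_leq_card/subsetP => b.
  rewrite in_setI inE => /andP[/andP[_ crb] bN].
  by apply/setIdP; split; rewrite // (troot_connect rZ crb) rr.
have -> : [set b in selected | troot b == r] = residue_class r (best_residue r).
  apply/setP => b; rewrite !inE; case: (eqVneq (troot b) r) => [<-|_]; last by rewrite !andbF.
  by case: (b \notin Z); case: [exists _ in _, _]; case: (b != _); case: (residue b == _).
have fibers : #|A :\ r| = \sum_(j in [set: 'I_3]) #|residue_class r j|.
  by rewrite (card_fibers (f := residue) (B := [set: 'I_3])).
have max_best :
    \sum_(j in [set: 'I_3]) #|residue_class r j| <= 3 * #|residue_class r (best_residue r)|.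
  rewrite -[X in X * _](card_ord 3) -cardsT -sum_nat_const leq_sum // => j _.
  by rewrite /best_residue; case: arg_maxnP => // i _; apply.
have := cardsD1 r A; rewrite rA fibers add1n; lia.
Qed.

Lemma card_N_selected : #|N| <= 4 * #|selected|.
Proof.
rewrite (card_fibers (f := troot) (B := [set troot b | b in N])); last first.
  by move=> b bN; apply: imset_f.
rewrite [#|selected|](card_fibers (f := troot) (B := [set troot b | b in N])); last first.
  by move=> b; rewrite inE => /andP[bN _]; apply: imset_f.
by rewrite big_distrr leq_sum // => r; apply: card_troot_selected.
Qed.

Definition hedge := {b : T | b \in selected}.
Definition hends (b : hedge) := (foot (parent (val b)), foot (val b)).
Definition hend (b : hedge) z := if foot (val b) == z then val b else parent (val b).

Lemma hedge_nonroot (b : hedge) : nonroot (val b).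
Proof. exact: selected_nonroot (valP b). Qed.

Lemma hends_Z (b : hedge) : (foot (parent (val b)) \in Z) && (foot (val b) \in Z).
Proof.
have /andP[bN _] := hedge_nonroot b.
by rewrite !footZ // parent_N // hedge_nonroot.
Qed.

Lemma hjoins_feet (b : hedge) u v : mjoins hends b u v ->
  [/\ u \in Z, v \in Z, u != v, foot (parent (val b)) \in [:: u; v]
    & foot (val b) \in [:: u; v]].
Proof.
have /andP[fpZ fbZ] := hends_Z b; have neq := foot_parent_neq (hedge_nonroot b).
by rewrite /mjoins /hends => /orP[]/eqP[<- <-]; rewrite !inE !eqxx ?orbT // eq_sym.
Qed.

Lemma hendP (b : hedge) u v : mjoins hends b u v ->
  [/\ hend b u \in transit (val b), hend b u \in N, foot (hend b u) = u & e (hend b u) u].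
Proof.
have b_nonroot := hedge_nonroot b; have /andP[bN _] := b_nonroot.
have pN := parent_N b_nonroot; have neq := foot_parent_neq b_nonroot.
rewrite /mjoins /hends /hend => /orP[]/eqP[fp fb].
  by rewrite -fp (negbTE neq) parent_transit // pN foot_adj.
by rewrite -fb eqxx mem_head bN foot_adj.
Qed.

Lemma hend_cases (b : hedge) u v : mjoins hends b u v ->
  (hend b u = val b /\ hend b v = parent (val b)) \/
  (hend b u = parent (val b) /\ hend b v = val b).
Proof.
have neq := foot_parent_neq (hedge_nonroot b).
rewrite /mjoins /hends /hend => /orP[]/eqP[<- <-]; rewrite eqxx (negbTE neq); by [right|left].
Qed.

Lemma hend_child (b : hedge) u v : mjoins hends b u v ->
  ndepth (hend b v) <= ndepth (hend b u) -> hend b u = val b /\ hend b v = parent (val b).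
Proof.
move=> j; have := ndepth_parent (hedge_nonroot b).
by case: (hend_cases j) => [//|[-> ->] ->]; rewrite ltnn.
Qed.

Lemma hcycle_Z c : mcycle hends c -> {subset c <= Z}.
Proof.
case: c => [|u [|v [|w q]]] //=.
- move=> /andP[_ /existsP[b /eqP[fp _]]] x; rewrite inE => /eqP ->.
  by rewrite -fp; case/andP: (hends_Z b).
- move=> /andP[_ /existsP[b1 /existsP[b2 /andP[/andP[_ j] _]]]] x.
  by case: (hjoins_feet j) => uZ vZ _ _ _; rewrite !inE => /orP[]/eqP->.
by move=> /andP[_ cyc] x /(next_cycle cyc) /existsP[b /hjoins_feet[]].
Qed.

Definition lift (c : seq T) : {set T} := [set v | (v \in c) ||
  [exists b : hedge, [&& foot (parent (val b)) \in c, foot (val b) \in c & v \in transit (val b)]]].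

Lemma transit_lift c (b : hedge) u v x : mjoins hends b u v -> u \in c -> v \in c ->
  x \in transit (val b) -> x \in lift c.
Proof.
move=> j uc vc xb; rewrite inE; apply/orP; right; apply/existsP; exists b.
case: (hjoins_feet j) => _ _ _; rewrite xb andbT !inE.
by move=> /orP[]/eqP-> /orP[]/eqP->; rewrite ?uc ?vc.
Qed.

Lemma hvertex_lift_anticomplete (c c' : seq T) x y :
  {subset c <= Z} -> {subset c' <= Z} -> [disjoint c & c'] ->
  x \in c -> y \in lift c' -> (x != y) && ~~ e x y.
Proof.
move=> cZ c'Z dj xc; rewrite inE => /orP[yc'|/existsP[b /and3P[fp fb yb]]].
  rewrite Zstable ?andbT; [|exact: cZ|exact: c'Z].
  by apply: contraTneq yc' => <-; rewrite (disjointFr dj xc).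
have xZ := cZ _ xc; have yZ := transit_notZ (hedge_nonroot b) yb.
have -> /= : x != y by apply: contraNneq yZ => <-.
apply/negP => exy; have yN : y \in N by apply: Nset_adj yZ xZ _; rewrite e_sym.
have xy : x = foot y by apply: foot_uniq; rewrite // e_sym.
have : x \in c' by rewrite xy; case: (transit_Nset (hedge_nonroot b) yb yN) => ->.
by rewrite (disjointFr dj xc).
Qed.

Lemma lift_anticomplete (c c' : seq T) x y :
  {subset c <= Z} -> {subset c' <= Z} -> [disjoint c & c'] ->
  x \in lift c -> y \in lift c' -> (x != y) && ~~ e x y.
Proof.
move=> cZ c'Z dj; rewrite inE => /orP[xc|/existsP[b /and3P[fpb fb xb]]] yc'.
  exact: (hvertex_lift_anticomplete cZ c'Z dj xc yc').
move: yc'; rewrite inE => /orP[yc'|/existsP[b' /and3P[fpb' fb' yb']]].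
  have xc : x \in lift c by rewrite inE; apply/orP; right; apply/existsP; exists b; rewrite fpb fb.
  rewrite disjoint_sym in dj.
  by have := hvertex_lift_anticomplete c'Z cZ dj yc' xc; rewrite eq_sym e_sym.
apply: (transit_anticomplete (hedge_nonroot b) (hedge_nonroot b')) => //; last first.
  exact: selected_residue (valP b) (valP b').
move=> u v; rewrite !inE => ub vb'.
have fuc : foot u \in c by case/orP: ub => /eqP->.
have fvc' : foot v \in c' by case/orP: vb' => /eqP->.
by apply: contraTneq fvc' => <-; rewrite (disjointFr dj fuc).
Qed.

Section LiftBut.
Variable c : seq T.
Hypothesis cZ : {subset c <= Z}.
Variable z : T.
Hypothesis zc : z \in c.

Definition lift_but := [set w in lift c | w != z].
Definition elift : rel T := [rel x y | [&& e x y, x \in lift_but & y \in lift_but]].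

Lemma connect_elift_sym : connect_sym elift.
Proof. by apply: sym_connect_sym => x y; rewrite /elift /= e_sym [(x \in _) && _]andbC. Qed.

Lemma lift_but_notZ x : x \in lift c -> x \notin Z -> x \in lift_but.
Proof. by move=> xc xZ; rewrite inE xc; apply: contraNneq xZ => ->; apply: cZ. Qed.

Lemma lift_but_cycle y : y \in c -> y != z -> y \in lift_but.
Proof. by move=> yc yz; rewrite !inE yc yz. Qed.

Lemma connect_transit (b : hedge) u v x y : mjoins hends b u v -> u \in c -> v \in c ->
  x \in transit (val b) -> y \in transit (val b) -> connect elift x y.
Proof.
move=> j uc vc xb yb.
have b_nonroot := hedge_nonroot b.
have bW w : w \in transit (val b) -> w \in lift_but.
  move=> wb; apply: lift_but_notZ (transit_notZ b_nonroot wb).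
  exact: transit_lift j uc vc wb.
have /(path_connect) bx : path elift (val b) (climb (up (val b))).
  apply: (sub_in_path (P := mem lift_but)) (sub_path eminusZ_sub (path_transit b_nonroot)).
    by move=> w w' /= wW w'W ew; rewrite /elift /= ew wW w'W.
  by apply/allP => w /bW.
by apply: connect_trans (bx _ yb); rewrite connect_elift_sym bx.
Qed.

Lemma connect_foot a y : a \in N -> a \in lift c -> foot a = y -> y \in c -> y != z ->
  connect elift a y.
Proof.
move=> aN ac <- yc yz; apply: connect1.
by rewrite /elift /= foot_adj // lift_but_notZ ?lift_but_cycle ?Nset_notZ.
Qed.

Lemma connect_hadj y y' : y \in c -> y' \in c -> y != z -> y' != z ->
  madj hends y y' -> connect elift y y'.
Proof.
move=> yc y'c yz y'z /existsP[b j].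
have j' : mjoins hends b y' y by rewrite mjoinsC.
have [by_ y_N fy _] := hendP j; have [by' y'_N fy' _] := hendP j'.
apply: (@connect_trans _ _ (hend b y)).
  by rewrite connect_elift_sym; apply: connect_foot y_N (transit_lift j yc y'c by_) fy yc yz.
apply: connect_trans (connect_transit j yc y'c by_ by') _.
exact: connect_foot y'_N (transit_lift j yc y'c by') fy' y'c y'z.
Qed.

Lemma connect_hpath y q : path (madj hends) y q ->
  all [pred w in c | w != z] (y :: q) -> connect elift y (last y q).
Proof.
elim: q y => [|y' q IHq] y /=; first by rewrite connect0.
move=> /andP[yy' yq] /and3P[/andP[yc yz] /andP[y'c y'z] qc].
by apply: connect_trans (connect_hadj yc y'c yz y'z yy') (IHq _ yq _); rewrite /= y'c y'z.
Qed.

(* The cycle runs from [hend b1 z] inside [lift_but] to [hend b2 z], then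
   back through [z]. *)
Lemma fork_gcycle (b1 b2 : hedge) w1 w2 :
  mjoins hends b1 z w1 -> mjoins hends b2 z w2 -> w1 \in c -> w2 \in c ->
  w1 != z -> w2 != z -> hend b1 z != hend b2 z -> connect elift w1 w2 ->
  exists g, gcycle e g && all [in lift c] g.
Proof.
move=> j1 j2 w1c w2c w1z w2z a12 cw.
have j1' : mjoins hends b1 w1 z by rewrite mjoinsC.
have j2' : mjoins hends b2 w2 z by rewrite mjoinsC.
have [a1b a1N _ ea1] := hendP j1; have [a2b _ _ ea2] := hendP j2.
have [c1b c1N fc1 _] := hendP j1'; have [c2b c2N fc2 _] := hendP j2'.
have c2c := transit_lift j2 zc w2c c2b.
have /connectP[p pp lp] : connect elift (hend b1 z) (hend b2 z).
  apply: connect_trans (connect_transit j1 zc w1c a1b c1b) _.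
  apply: connect_trans (connect_foot c1N (transit_lift j1 zc w1c c1b) fc1 w1c w1z) _.
  apply: connect_trans cw _; apply: connect_trans _ (connect_transit j2 zc w2c c2b a2b).
  by rewrite connect_elift_sym; apply: connect_foot.
pose r := [rel x y | elift x y || (x == hend b2 z) && (y == z)].
have sub_r : subrel r e by move=> x y /orP[/andP[]//|/andP[/eqP-> /eqP->]].
have a1z : hend b1 z != z by apply: contraNneq (Nset_notZ a1N) => ->; apply: cZ.
have not_r : ~~ r (hend b1 z) z.
  by rewrite /r /= negb_or negb_and a12 /elift /= !inE eqxx !andbF.
have pr : path r (hend b1 z) (rcons p z).
  by rewrite rcons_path -lp /= !eqxx orbT andbT (sub_path _ pp) // => x y /= ->.
have [g gg sub_g] := path_edge_gcycle e_sym sub_r a1z ea1 not_r pr (last_rcons _ _ _).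
exists g; rewrite gg; apply/allP => x /sub_g.
rewrite inE mem_rcons inE => /orP[/eqP->|/orP[/eqP->|xp]].
- exact: transit_lift j1 zc w1c a1b.
- by rewrite inE zc.
have elift_but u v : elift u v -> v \in lift_but by case/and3P.
by have /allP/(_ _ xp)/setIdP[] := path_all_target elift_but pp.
Qed.

End LiftBut.

Lemma hedge_eq (b1 b2 : hedge) u v : mjoins hends b1 u v -> mjoins hends b2 u v ->
  hend b1 u = hend b2 u -> hend b1 v = hend b2 v -> b1 = b2.
Proof.
move=> j1 j2 eu ev; apply: val_inj.
have d1 := ndepth_parent (hedge_nonroot b1); have d2 := ndepth_parent (hedge_nonroot b2).
case: (hend_cases j1) => -[h1u h1v]; case: (hend_cases j2) => -[h2u h2v].
- by rewrite -h1u -h2u.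
- have e1 : val b1 = parent (val b2) by rewrite -h1u eu h2u.
  have e2 : parent (val b1) = val b2 by rewrite -h1v ev h2v.
  by move: d1; rewrite e2 d2 -e1; lia.
- have e1 : parent (val b1) = val b2 by rewrite -h1u eu h2u.
  have e2 : val b1 = parent (val b2) by rewrite -h1v ev h2v.
  by move: d1; rewrite e1 d2 -e2; lia.
- by rewrite -h1v -h2v.
Qed.

Lemma parallel_hedges_lift (b1 b2 : hedge) u v :
  b1 != b2 -> mjoins hends b1 u v -> mjoins hends b2 u v ->
  exists g, gcycle e g && all [in lift [:: u; v]] g.
Proof.
move=> b12 j1 j2; have [uZ vZ uv _ _] := hjoins_feet j1.
have cZ : {subset [:: u; v] <= Z} by move=> x; rewrite !inE => /orP[]/eqP->.
have uc : u \in [:: u; v] by rewrite mem_head.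
have vc : v \in [:: u; v] by rewrite !inE eqxx orbT.
have [eu|neu] := eqVneq (hend b1 u) (hend b2 u); last first.
  by apply: (fork_gcycle cZ uc j1 j2 vc vc _ _ neu); rewrite ?connect0 // eq_sym.
have [ev|nev] := eqVneq (hend b1 v) (hend b2 v).
  by rewrite (hedge_eq j1 j2 eu ev) eqxx in b12.
rewrite mjoinsC in j1; rewrite mjoinsC in j2.
by apply: (fork_gcycle cZ vc j1 j2 uc uc _ _ nev); rewrite ?connect0.
Qed.

Section LongHCycle.
Variable c : seq T.
Hypotheses (c_uniq : uniq c) (c_cycle : cycle (madj hends) c) (c_size : 2 < size c).
Hypothesis cZ : {subset c <= Z}.
Variable b0 : hedge.

Definition cycle_edge y := odflt b0 [pick b | mjoins hends b y (next c y)].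

Lemma cycle_edgeP y : y \in c -> mjoins hends (cycle_edge y) y (next c y).
Proof.
move=> /(next_cycle c_cycle) /existsP[b j].
by rewrite /cycle_edge; case: pickP => [//|/(_ b)]; rewrite j.
Qed.

Lemma cycle_edge_prevP y : y \in c -> mjoins hends (cycle_edge (prev c y)) y (prev c y).
Proof.
move=> yc; have := cycle_edgeP (_ : prev c y \in c); rewrite mem_prev yc => /(_ isT).
by rewrite next_prev // mjoinsC.
Qed.

Let out_end y := hend (cycle_edge y) y.
Let in_end y := hend (cycle_edge (prev c y)) y.

Lemma hcycle_fork_lift y : y \in c -> out_end y != in_end y ->
  exists g, gcycle e g && all [in lift c] g.
Proof.
move=> yc ne; have [q [pq lq npq sub_q]] := cycle_rot_path c_uniq c_cycle c_size yc.
have /andP[nc ny] := sub_q _ (mem_head _ _).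
have /andP[pc py] : prev c y \in [pred w in c | w != y] by rewrite sub_q // -lq mem_last.
apply: (fork_gcycle cZ yc (cycle_edgeP yc) (cycle_edge_prevP yc) nc pc ny py ne).
by rewrite -lq connect_hpath //; apply/allP.
Qed.

(* Otherwise pick [y] whose end is deepest: both cycle edges at [y] have their
   child end at [y], so they are the same edge of [H] and the two neighbours of
   [y] coincide. *)
Lemma hcycle_fork_exists : exists2 y, y \in c & out_end y != in_end y.
Proof.
have [/exists_inP //|/exists_inPn ends_eq] := boolP [exists y in c, out_end y != in_end y].
have {}ends_eq y : y \in c -> out_end y = in_end y by move/ends_eq/negPn/eqP.
have y0c : nth (val b0) c 0 \in c by apply: mem_nth; apply: leq_trans c_size.
case: (@arg_maxnP _ _ [in c] (ndepth \o out_end) y0c) => y yc y_max.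
have nc := mem_next c y; have pc := mem_prev c y; rewrite yc in nc pc.
have jn := cycle_edgeP yc; have jn' := jn; rewrite mjoinsC in jn'.
have jp := cycle_edge_prevP yc; have jp' := jp; rewrite mjoinsC in jp'.
have n_in : hend (cycle_edge y) (next c y) = out_end (next c y).
  by rewrite ends_eq // /in_end prev_next.
have [yn nn] : out_end y = val (cycle_edge y) /\
    hend (cycle_edge y) (next c y) = parent (val (cycle_edge y)).
  by apply: hend_child jn _; rewrite n_in; apply: y_max.
have [yp pp] : in_end y = val (cycle_edge (prev c y)) /\
    hend (cycle_edge (prev c y)) (prev c y) = parent (val (cycle_edge (prev c y))).
  have ey : hend (cycle_edge y) y = hend (cycle_edge (prev c y)) y := ends_eq y yc.
  by apply: hend_child jp _; rewrite -ey; apply: y_max.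
have same : val (cycle_edge y) = val (cycle_edge (prev c y)).
  by rewrite -yn -yp -ends_eq.
have [_ _ fn _] := hendP jn'; have [_ _ fp _] := hendP jp'.
have [_ [_ _ npq _]] := cycle_rot_path c_uniq c_cycle c_size yc.
by move: npq; rewrite -fn -fp nn pp same eqxx.
Qed.

Lemma long_hcycle_lift : exists g, gcycle e g && all [in lift c] g.
Proof. by have [y yc ne] := hcycle_fork_exists; apply: hcycle_fork_lift yc ne. Qed.

End LongHCycle.

Lemma hcycle_lift c : mcycle hends c -> exists g, gcycle e g && all [in lift c] g.
Proof.
move=> cyc; have cZ := hcycle_Z cyc.
case: c cyc cZ => [|u [|v [|w q]]] //.
- case/andP=> _ /existsP[b /eqP[fp fb]].
  by have := foot_parent_neq (hedge_nonroot b); rewrite fp fb eqxx.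
- case/andP=> _ /existsP[b1 /existsP[b2 /andP[/andP[b12 j1] j2]]] _.
  exact: parallel_hedges_lift j1 j2.
set c := [:: u, v, w & q] => /andP[c_uniq c_cycle] cZ.
have [b0 _] := existsP (next_cycle c_cycle (mem_head u _)).
exact: long_hcycle_lift c_uniq c_cycle isT cZ b0.
Qed.

Lemma hcycle_packing_free s : sO_free e s ->
  ~ (exists cs : 'I_s -> seq T,
       (forall i, mcycle hends (cs i)) /\ (forall i j, i <> j -> [disjoint cs i & cs j])).
Proof.
move=> free [cs [cyc disj]]; apply: free.
pose g i := xchoose (hcycle_lift (cyc i)).
have gP i : gcycle e (g i) && all [in lift (cs i)] (g i) := xchooseP (hcycle_lift (cyc i)).
exists g; split=> [i|i j ij x y xg yg]; first by case/andP: (gP i).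
have /andP[_ /allP/(_ _ xg) xc] := gP i; have /andP[_ /allP/(_ _ yg) yc] := gP j.
have := lift_anticomplete (hcycle_Z (cyc i)) (hcycle_Z (cyc j)) (disj i j ij) xc yc.
by case/andP=> /eqP.
Qed.

Lemma path_edges_transit_head b : nonroot b -> [set b; up b] \in path_edges (transit b).
Proof.
rewrite /path_edges /transit inE => _.
by case: (climb_head (up b)) => q ->; rewrite /= inE eqxx.
Qed.

Lemma path_edges_transit_mem b E' u :
  E' \in path_edges (transit b) -> u \in E' -> u \in transit b.
Proof.
rewrite /path_edges inE => /mapP[xy /mem_zip_pair/andP[x_in y_in] ->].
by rewrite in_set2 => /orP[]/eqP-> //; apply: mem_behead.
Qed.

Lemma path_edges_transit_inj (b1 b2 : hedge) :
  path_edges (transit (val b1)) = path_edges (transit (val b2)) -> b1 = b2.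
Proof.
move=> same_edges; apply: val_inj.
have n1 := hedge_nonroot b1; have n2 := hedge_nonroot b2.
have /andP[b1N _] := n1; have /andP[b2N _] := n2.
have b1_in : val b1 \in transit (val b2).
  apply: (@path_edges_transit_mem _ [set val b1; up (val b1)]); last by rewrite !inE eqxx.
  by rewrite -same_edges path_edges_transit_head.
have b2_in : val b2 \in transit (val b1).
  apply: (@path_edges_transit_mem _ [set val b2; up (val b2)]); last by rewrite !inE eqxx.
  by rewrite same_edges path_edges_transit_head.
case: (transit_Nset n2 b1_in b1N) => [//|p1].
case: (transit_Nset n1 b2_in b2N) => [//|p2].
by have := ndepth_parent n1; rewrite -p2 (ndepth_parent n2) -p1; lia.
Qed.

Definition hfeet (b : hedge) := [set foot (parent (val b)); foot (val b)].

Lemma card_hedges_between x z :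
  #|[set b | hfeet b == [set x; z]]| <= multiplicity e Z x z.
Proof.
rewrite -(card_in_imset (f := fun b : hedge => path_edges (transit (val b)))); last first.
  by move=> b1 b2 _ _; apply: path_edges_transit_inj.
apply/subset_leq_card/subsetP => S /imsetP[b]; rewrite inE => /eqP hf ->.
rewrite inE; apply/asboolP; exists (transit (val b)); split => //.
  exact: transit_transition (hedge_nonroot b).
by rewrite feet_transit ?hedge_nonroot // setUC.
Qed.

Lemma multiplicity_le_thickness x z : x \in Z -> z \in Z -> multiplicity e Z x z <= thickness e Z.
Proof.
move=> xZ zZ; rewrite /thickness.
pose F (zz : T * T) := multiplicity e Z zz.1 zz.2.
by apply: (leq_bigmax_cond (F := F) (x, z)); rewrite /= xZ.
Qed.

Lemma card_hedges_at x : #|[set b | x \in hfeet b]| <= #|Z| * thickness e Z.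
Proof.
have [xZ|xZ] := boolP (x \in Z); last first.
  rewrite eq_card0 // => b; rewrite !inE; have /andP[h1 h2] := hends_Z b.
  by apply/negP => /orP[]/eqP ex; rewrite ex ?h1 ?h2 in xZ.
pose other (b : hedge) :=
  if foot (parent (val b)) == x then foot (val b) else foot (parent (val b)).
rewrite (card_fibers (f := other) (B := Z)); last first.
  by move=> b _; rewrite /other; case/andP: (hends_Z b) => h1 h2; case: ifP.
rewrite -sum_nat_const leq_sum // => z zZ.
apply: leq_trans (multiplicity_le_thickness xZ zZ).
apply: leq_trans (card_hedges_between x z); apply/subset_leq_card/subsetP => b.
rewrite !inE /other /hfeet => /andP[/orP[]/eqP-> /eqP oz].
  by rewrite eqxx in oz; rewrite oz.
by rewrite eq_sym (negbTE (foot_parent_neq (hedge_nonroot b))) in oz; rewrite oz setUC.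
Qed.

Lemma card_selected s phi : erdos_posa_bound s phi -> sO_free e s ->
  #|selected| <= (thickness e Z * phi + 1) * #|Z|.
Proof.
move=> EP free; set k := thickness e Z.
have [X [cardX hitX]] := EP T hedge hends (hcycle_packing_free free).
pose A := [set b : hedge | (foot (parent (val b)) \notin X) && (foot (val b) \notin X)].
have cardA : #|A| <= #|Z|.
  apply: leq_trans (subset_leq_card (subsetDl Z X)).
  apply: acyclic_card_edges => [b|c cyc c_sub]; last first.
    by have [x xX /c_sub] := hitX c cyc; rewrite inE xX.
  rewrite inE /hends /= => /andP[fpX fbX]; have /andP[fpZ fbZ] := hends_Z b.
  by rewrite !inE fpZ fbZ fpX fbX.
pose in_X (b : hedge) :=
  if foot (parent (val b)) \in X then foot (parent (val b)) else foot (val b).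
have cardAc : #|~: A| <= #|X| * (#|Z| * k).
  rewrite (card_fibers (f := in_X) (B := X)); last first.
    by move=> b; rewrite !inE negb_and !negbK /in_X; case: ifP.
  rewrite -sum_nat_const leq_sum // => x xX.
  apply: leq_trans (card_hedges_at x); apply/subset_leq_card/subsetP => b.
  by rewrite !inE /in_X => /andP[_]; case: ifP => _ /eqP->; rewrite eqxx ?orbT.
have -> : #|selected| = #|A| + #|~: A| by rewrite cardsC card_sig.
have : #|X| * (#|Z| * k) <= phi * (#|Z| * k) by rewrite leq_mul2r cardX orbT.
nia.
Qed.

Lemma card_Nset_le s phi : erdos_posa_bound s phi -> sO_free e s ->
  #|N| <= 4 * (thickness e Z * phi + 1) * #|Z|.
Proof.
move=> EP free; apply: leq_trans card_N_selected _.
by rewrite -mulnA leq_mul2l (card_selected EP free).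
Qed.

End Plantation.

Theorem mainTheorem13 (s : nat) (phi : nat) (T : finType) (e : rel T)
    (Z : {set T}) (k : nat) :
  1 <= s ->
  erdos_posa_bound s phi ->
  plantation e s Z ->
  monic e Z ->
  selfless e Z ->
  thickness e Z = k ->
  (forall v, v \notin Z -> 2 <= #|component e Z v :&: Nset e Z|) ->
  #|Nset e Z| <= 4 * (k * phi + 1) * #|Z|.
Proof.
move=> _ EP [[e_sym e_irr] [free hit]] [stable monic_N] selfless_Z <- componentN.
exact: (card_Nset_le e_sym e_irr hit stable monic_N selfless_Z componentN EP free).
Qed.
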